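(* Let $b_0,b_1,\ldots,b_p\in\mathbb R^n$ and $-\infty\le l_i\le u_i\le+\infty$ for $i=1,\ldots,p$. Consider \[ {\rm (U)}\quad \max_{x\in\mathbb R^n}\ x^Tx+b_0^Tx\quad \text{s.t.}\quad l_i\le x^Tx+2b_i^Tx\le u_i,\ i=1,\ldots,p, \] and the second-order cone programming relaxation \[ {\rm (S)}\quad \max_{x\in\mathbb R^n,\,t\in\mathbb R}\ t+b_0^Tx\quad \text{s.t.}\quad l_i\le t+2b_i^Tx\le u_i,\ i=1,\ldots,p,\qquad \left\|\begin{pmatrix} x\\ \frac{t-1}{2}\end{pmatrix}\right\|\le \frac{t+1}{2}. \] Suppose that either ${\rm rank}[b_1,\ldots,b_p]\le n-1$ or $p=n$. Then (U) is equivalent to (S), in the sense that $x^*$ globally solves (U) if and only if $(x^*,t^* ):=(x^*,x^{*T}x^* )$ globally solves (S).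
   Context: $\|\cdot\|$ is the Euclidean norm. *)

From HB Require Import structures.
From mathcomp Require Import all_boot all_order all_algebra.
From mathcomp Require Import reals constructive_ereal.
Set Implicit Arguments. Unset Strict Implicit. Unset Printing Implicit Defensive.
Import Order.TTheory GRing.Theory Num.Theory.
Local Open Scope ring_scope.

Definition dotv (R : realType) (n : nat) (x y : 'cV[R]_n) : R :=
  \sum_(k < n) x k 0 * y k 0.

Definition colmat (R : realType) (n p : nat) (b : 'I_p -> 'cV[R]_n) : 'M[R]_(n, p) :=
  \matrix_(k < n, i < p) b i k 0.

Definition in_eint (R : realType) (l u : \bar R) (v : R) : Prop :=
  (l <= v%:E)%E /\ (v%:E <= u)%E.

Definition feasU (R : realType) (n p : nat) (b : 'I_p -> 'cV[R]_n)
  (l u : 'I_p -> \bar R) (x : 'cV[R]_n) : Prop :=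
  forall i : 'I_p, in_eint (l i) (u i) (dotv x x + 2 * dotv (b i) x).

Definition objU (R : realType) (n : nat) (b0 x : 'cV[R]_n) : R :=
  dotv x x + dotv b0 x.

Definition solvesU (R : realType) (n p : nat) (b0 : 'cV[R]_n) (b : 'I_p -> 'cV[R]_n)
  (l u : 'I_p -> \bar R) (x : 'cV[R]_n) : Prop :=
  feasU b l u x /\ forall y, feasU b l u y -> objU b0 y <= objU b0 x.

(* feasibility for the SOCP relaxation (S):
   || (x ; (t-1)/2) || <= (t+1)/2, Euclidean norm in R^(n+1) *)
Definition feasS (R : realType) (n p : nat) (b : 'I_p -> 'cV[R]_n)
  (l u : 'I_p -> \bar R) (x : 'cV[R]_n) (t : R) : Prop :=
  (forall i : 'I_p, in_eint (l i) (u i) (t + 2 * dotv (b i) x)) /\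
  Num.sqrt (dotv x x + ((t - 1) / 2) ^+ 2) <= (t + 1) / 2.

Definition objS (R : realType) (n : nat) (b0 x : 'cV[R]_n) (t : R) : R :=
  t + dotv b0 x.

Definition solvesS (R : realType) (n p : nat) (b0 : 'cV[R]_n) (b : 'I_p -> 'cV[R]_n)
  (l u : 'I_p -> \bar R) (x : 'cV[R]_n) (t : R) : Prop :=
  feasS b l u x t /\
  forall y s, feasS b l u y s -> objS b0 y s <= objS b0 x t.

(* The cone constraint of (S) says exactly [x^T x <= t], so (x, x^T x) is
   feasible for (S) iff x is feasible for (U), and (S) only adds points (y, s)
   with [y^T y < s].  The rank hypothesis gives a direction d <> 0 with all
   [b_i^T d] equal to one constant kap: a kernel vector of [b_1, ..., b_p]^T, or,
   when this matrix is square and invertible, a preimage of the all-ones vector.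
   Along z = y + lam d every constraint value [z^T z + 2 b_i^T z] then differs
   from its relaxed value [s + 2 b_i^T y] by the same quadratic in lam, which is
   [y^T y - s <= 0] at lam = 0 and so has a root of either sign; the root of the
   right sign gives a (U)-feasible z with [z^T z + b_0^T z >= s + b_0^T y]. *)

From HB Require Import structures.
From mathcomp Require Import all_boot all_order all_algebra.
From mathcomp Require Import reals constructive_ereal.
From mathcomp Require Import ring lra.
Set Implicit Arguments. Unset Strict Implicit. Unset Printing Implicit Defensive.
Import Order.TTheory GRing.Theory Num.Theory.
Local Open Scope ring_scope.

Lemma cone_constraint_iff (R : rcfType) (a t : R) : 0 <= a ->
  Num.sqrt (a + ((t - 1) / 2) ^+ 2) <= (t + 1) / 2 <-> a <= t.
Proof.
move=> a_ge0; set c := (t + 1) / 2.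
have sqrt_le_c : 0 <= c -> (Num.sqrt (a + ((t - 1) / 2) ^+ 2) <= c) = (a <= t).
  move=> c_ge0; rewrite -(ger0_norm c_ge0) -sqrtr_sqr ler_sqrt ?sqr_ge0 //.
  have -> : c ^+ 2 = t + ((t - 1) / 2) ^+ 2 by rewrite /c; field.
  by rewrite lerD2r.
split=> [le_c | le_at]; last by rewrite sqrt_le_c // /c; lra.
by rewrite -sqrt_le_c // (le_trans (sqrtr_ge0 _) le_c).
Qed.

Lemma quadratic_root_sign (R : rcfType) (a be c g : R) : 0 < a -> c <= 0 ->
  exists lam, a * lam ^+ 2 + 2 * be * lam + c = 0 /\ 0 <= lam * g.
Proof.
move=> a_gt0 c_le0.
pose s : R := Num.sqrt (be ^+ 2 - a * c).
have s_ge0 : 0 <= s by rewrite sqrtr_ge0.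
have s2 : s ^+ 2 = be ^+ 2 - a * c by rewrite sqr_sqrtr //; nra.
have [be_le_s Nbe_le_s] : be <= s /\ - be <= s.
  have abs_be_le_s : `|be| <= s by rewrite -sqrtr_sqr ler_wsqrtr //; nra.
  by split; apply: le_trans abs_be_le_s; rewrite ?ler_normr ?lexx ?orbT.
have root r : r ^+ 2 = s ^+ 2 ->
    a * ((- be + r) / a) ^+ 2 + 2 * be * ((- be + r) / a) + c = 0.
  move=> r2; apply: (mulfI (lt0r_neq0 a_gt0)); rewrite mulr0.
  have -> : a * (a * ((- be + r) / a) ^+ 2 + 2 * be * ((- be + r) / a) + c)
      = r ^+ 2 - be ^+ 2 + a * c by field; rewrite lt0r_neq0.
  by rewrite r2 s2; ring.
have [g_ge0 | g_lt0] := lerP 0 g.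
- exists ((- be + s) / a); split; first exact: root.
  by rewrite mulr_ge0 // divr_ge0 //; lra.
- exists ((- be + - s) / a); split; first by apply: root; rewrite sqrrN.
  by rewrite mulr_le0 ?(ltW g_lt0) // mulr_le0_ge0 // ?invr_ge0; lra.
Qed.

Lemma mxrank_lt_row_kernel (F : fieldType) m k (A : 'M[F]_(m, k)) :
  (\rank A < m)%N -> exists2 r : 'rV_m, r != 0 & r *m A = 0.
Proof.
move=> rank_lt; have : kermx A != 0 by rewrite kermx_eq0 /row_free neq_ltn rank_lt.
by case/rowV0Pn => r /sub_kermxP rA r_neq0; exists r.
Qed.

Lemma row_full_const_preimage (F : fieldType) m k (A : 'M[F]_(m, k)) :
  (0 < k)%N -> row_full A -> exists2 r : 'rV_m, r != 0 & r *m A = const_mx 1.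
Proof.
move=> k_gt0 fullA; have /submxP[r r1] := submx_full (const_mx 1 : 'rV_k) fullA.
exists r => //; apply/eqP => r0; move: r1; rewrite r0 mul0mx.
by move/matrixP/(_ 0 (Ordinal k_gt0)); rewrite !mxE => /eqP; rewrite oner_eq0.
Qed.

Section InnerProduct.
Variables (R : realType) (n : nat).
Implicit Types x y d : 'cV[R]_n.

Lemma dotv_ge0 x : 0 <= dotv x x.
Proof. by apply: sumr_ge0 => k _; rewrite -expr2 sqr_ge0. Qed.

Lemma dotv_gt0 x : x != 0 -> 0 < dotv x x.
Proof.
rewrite lt_def dotv_ge0 andbT; apply: contra => /eqP; rewrite /dotv => x2_eq0.
apply/eqP/matrixP => k j; rewrite ord1 mxE.
have x2_ge0 i : true -> 0 <= x i 0 * x i 0 by rewrite -expr2 sqr_ge0.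
by have /eqP := psumr_eq0P x2_ge0 x2_eq0 (i := k) isT; rewrite mulf_eq0 orbb => /eqP.
Qed.

Lemma dotvDZr x y d (a : R) : dotv x (y + a *: d) = dotv x y + a * dotv x d.
Proof.
by rewrite /dotv mulr_sumr -big_split; apply: eq_bigr => k _ /=; rewrite !mxE; ring.
Qed.

Lemma dotv_sqrDZ y d (a : R) : dotv (y + a *: d) (y + a *: d)
  = dotv y y + 2 * a * dotv y d + a ^+ 2 * dotv d d.
Proof.
rewrite /dotv !mulr_sumr -!big_split; apply: eq_bigr => k _ /=; rewrite !mxE; ring.
Qed.

End InnerProduct.

Lemma dotv_colmat (R : realType) n p (b : 'I_p -> 'cV[R]_n) (r : 'rV[R]_n) i :
  dotv (b i) r^T = (r *m colmat b) 0 i.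
Proof. by rewrite !mxE; apply: eq_bigr => k _; rewrite !mxE mulrC. Qed.

Lemma const_dotv_direction (R : realType) n p (b : 'I_p -> 'cV[R]_n) :
  (0 < n)%N -> (\rank (colmat b) <= n.-1)%N \/ p = n ->
  exists2 d : 'cV[R]_n, d != 0 & exists kap, forall i, dotv (b i) d = kap.
Proof.
move=> n_gt0 hrank.
suff [r r_neq0 [kap rb]] : exists2 r : 'rV[R]_n, r != 0 &
    exists kap, r *m colmat b = const_mx kap.
  by exists r^T; [rewrite trmx_eq0 | exists kap => i; rewrite dotv_colmat rb mxE].
have [rank_lt | rank_ge] := ltnP (\rank (colmat b)) n.
  have [r r_neq0 rb0] := mxrank_lt_row_kernel rank_lt.
  by exists r => //; exists 0; rewrite rb0.
have p_eq_n : p = n.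
  case: hrank => // rank_le; move: (leq_trans rank_ge rank_le).
  by rewrite leqNgt ltn_predL n_gt0.
have full_b : row_full (colmat b).
  by rewrite /row_full eqn_leq rank_leq_col (leq_trans _ rank_ge) ?p_eq_n.
have [|r r_neq0 rb1] := row_full_const_preimage _ full_b; first by rewrite p_eq_n.
by exists r => //; exists 1.
Qed.

Section Relaxation.
Variables (R : realType) (n p : nat) (b0 : 'cV[R]_n) (b : 'I_p -> 'cV[R]_n).
Variables (l u : 'I_p -> \bar R).

Lemma feasU_feasS x : feasU b l u x -> feasS b l u x (dotv x x).
Proof. by move=> fx; split=> //; apply/cone_constraint_iff; rewrite ?dotv_ge0. Qed.

Lemma feasS_dotv_le y s : feasS b l u y s -> dotv y y <= s.
Proof. by case=> _ /cone_constraint_iff; apply; apply: dotv_ge0. Qed.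

Lemma feasS_dominated (d : 'cV[R]_n) (kap : R) y s :
  d != 0 -> (forall i, dotv (b i) d = kap) -> feasS b l u y s ->
  exists2 z, feasU b l u z & objS b0 y s <= objU b0 z.
Proof.
move=> d_neq0 bd fys; have [fy _] := fys.
have ys_le0 : dotv y y - s <= 0 by rewrite subr_le0 (feasS_dotv_le fys).
have [lam [root sign]] := quadratic_root_sign (dotv y d + kap)
  (dotv b0 d - 2 * kap) (dotv_gt0 d_neq0) ys_le0.
have sqr_z : dotv (y + lam *: d) (y + lam *: d) = s - 2 * lam * kap.
  by rewrite dotv_sqrDZ; lra.
exists (y + lam *: d).
  move=> i; rewrite sqr_z dotvDZr bd.
  have -> : s - 2 * lam * kap + 2 * (dotv (b i) y + lam * kap)
    = s + 2 * dotv (b i) y by ring.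
  exact: fy.
by rewrite /objS /objU sqr_z dotvDZr; lra.
Qed.

End Relaxation.

Theorem theorem1 (R : realType) (n p : nat) (b0 : 'cV[R]_n)
  (b : 'I_p -> 'cV[R]_n) (l u : 'I_p -> \bar R)
  (hn : (0 < n)%N)
  (hlu : forall i : 'I_p, (l i <= u i)%E)
  (hrank : (\rank (colmat b) <= n.-1)%N \/ p = n) :
  forall x : 'cV[R]_n, solvesU b0 b l u x <-> solvesS b0 b l u x (dotv x x).
Proof.
have [d d_neq0 [kap bd]] := const_dotv_direction hn hrank.
move=> x; split=> [[fx optx] | [fx optx]].
  split=> [|y s fys]; first exact: feasU_feasS.
  have [z fz le_z] := feasS_dominated b0 d_neq0 bd fys.
  exact: le_trans le_z (optx z fz).
by split=> [|y fy]; [case: fx | exact: optx _ _ (feasU_feasS fy)].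
Qed.
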